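(* Let $M$ be a graded quasi-primaryful $R$-module and $Y\subseteq qp.Spec_g(M)$. Then $Y$ is an irreducible closed subset of $qp.Spec_g(M)$ (quasi-Zariski topology) if and only if $Y=qp\text{-}V_M^g(Q)$ for some $Q\in qp.Spec_g(M)$. In particular, every irreducible closed subset of $qp.Spec_g(M)$ has a generic point.
   Context: $R=\bigoplus_{g\in G}R_g$ is a graded commutative ring with identity graded by a group $G$, $h(R)=\bigcup_g R_g$; $M$ is a graded $R$-module, $h(M)$ its homogeneous elements. $Gr(I)$ is the graded radical of a graded ideal $I$. $(K:_RM)=\{r: rM\subseteq K\}$. Graded prime submodule: proper graded $P$ with $rm\in P$ ($r\in h(R), m\in h(M)$) implying $m\in P$ or $r\in(P:_RM)$. $Gr_M(K)$: intersection of graded prime submodules containing $K$ ($M$ if none). Graded primeful property of $K$: for each graded prime $p\supseteq(K:_RM)$ there is a graded prime submodule $P\supseteq K$ with $(P:_RM)=p$. Graded quasi-primary submodule: proper graded $Q$ with $rm\in Q$ ($r\in h(R),m\in h(M)$) implying $r\in Gr((Q:_RM))$ or $m\in Gr_M(Q)$. $qp.Spec_g(M)$: graded quasi-primary submodules with the graded primeful property. $qp\text{-}V_M^g(K)=\{Q\in qp.Spec_g(M): Gr((Q:_RM))\supseteq Gr((K:_RM))\}$; the quasi-Zariski topology has closed sets exactly these. A graded quasi-primary ideal of $R$ is a proper graded ideal $q$ with $ab\in q$ ($a,b\in h(R)$) implying $a\in Gr(q)$ or $b\in Gr(q)$. $M$ is graded quasi-primaryful if $M=0$, or $M\ne 0$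 and for every graded quasi-primary ideal $q\supseteq\mathrm{Ann}(M)$ of $R$ there is $Q\in qp.Spec_g(M)$ with $Gr((Q:_RM))=Gr(q)$. A subset $A$ of a topological space is irreducible if whenever $A\subseteq A_1\cup A_2$ with $A_1,A_2$ closed, then $A\subseteq A_1$ or $A\subseteq A_2$. A generic point of a closed set $Y$ is $y\in Y$ with $Y=cl(\{y\})$. *)

From mathcomp Require Import all_boot all_algebra.
Set Implicit Arguments. Unset Strict Implicit. Unset Printing Implicit Defensive.
Import GRing.Theory.
Local Open Scope ring_scope.

(* An arbitrary (not necessarily abelian, possibly infinite) group structure
   on a carrier G, given by its operations and axioms. *)
Record group_law (G : Type) := GroupLaw {
  gmul : G -> G -> G;
  gunit : G;
  ginv : G -> G;
  gmulA : forall x y z, gmul x (gmul y z) = gmul (gmul x y) z;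
  gmul1 : forall x, gmul gunit x = x;
  gmulV : forall x, gmul (ginv x) x = gunit }.

Definition incl (T : Type) (A B : T -> Prop) := forall x, A x -> B x.
Definition seteq (T : Type) (A B : T -> Prop) := forall x, A x <-> B x.

Section Graded.
Variable G : Type.

Definition decomposes (T : zmodType) (Tg : G -> T -> Prop) (P : T -> Prop) (x : T) :=
  exists (n : nat) (gs : 'I_n -> G) (ys : 'I_n -> T),
    (forall i, Tg (gs i) (ys i) /\ P (ys i)) /\ x = \sum_(i < n) ys i.

(* the sum of the Tg's is direct: T_g meets the sum of the other T_h in 0 *)
Definition independent (T : zmodType) (Tg : G -> T -> Prop) :=
  forall (g : G) (x : T) (n : nat) (gs : 'I_n -> G) (ys : 'I_n -> T),
    Tg g x -> (forall i, gs i <> g /\ Tg (gs i) (ys i)) ->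
    x = \sum_(i < n) ys i -> x = 0.

Definition zmod_closed_P (T : zmodType) (A : T -> Prop) :=
  A 0 /\ forall x y, A x -> A y -> A (x - y).

Variable gl : group_law G.
Variable R : comPzRingType.
Variable Rg : G -> R -> Prop.

Definition graded_ring :=
  [/\ forall g, zmod_closed_P (Rg g),
      forall g h a b, Rg g a -> Rg h b -> Rg (gmul gl g h) (a * b),
      forall x : R, decomposes Rg (fun _ => True) x
    & independent Rg].

Variable M : lmodType R.
Variable Mg : G -> M -> Prop.

Definition graded_module :=
  [/\ forall g, zmod_closed_P (Mg g),
      forall g h (r : R) (m : M), Rg g r -> Mg h m -> Mg (gmul gl g h) (r *: m),
      forall x : M, decomposes Mg (fun _ => True) x
    & independent Mg].

Definition hR (r : R) := exists g, Rg g r.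
Definition hM (m : M) := exists g, Mg g m.

Definition is_ideal (I : R -> Prop) :=
  [/\ I 0, forall x y, I x -> I y -> I (x + y) & forall r x, I x -> I (r * x)].
Definition graded_ideal (I : R -> Prop) :=
  is_ideal I /\ forall x, I x -> decomposes Rg I x.
Definition proper_ideal (I : R -> Prop) := exists r, ~ I r.

Definition is_submodule (N : M -> Prop) :=
  [/\ N 0, forall x y, N x -> N y -> N (x + y) & forall (r : R) m, N m -> N (r *: m)].
Definition graded_submodule (N : M -> Prop) :=
  is_submodule N /\ forall m, N m -> decomposes Mg N m.
Definition proper_sub (N : M -> Prop) := exists m, ~ N m.

Definition colon (N : M -> Prop) : R -> Prop := fun r => forall m, N (r *: m).

(* graded radical: x = sum of homogeneous components, each having a power in I *)
Definition Gr (I : R -> Prop) : R -> Prop := fun x =>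
  exists (n : nat) (gs : 'I_n -> G) (ys : 'I_n -> R),
    (forall i, Rg (gs i) (ys i) /\ exists k, I (ys i ^+ k)) /\ x = \sum_(i < n) ys i.

Definition graded_prime_ideal (p : R -> Prop) :=
  [/\ graded_ideal p, proper_ideal p &
      forall a b, hR a -> hR b -> p (a * b) -> p a \/ p b].

Definition graded_prime_sub (P : M -> Prop) :=
  [/\ graded_submodule P, proper_sub P &
      forall r m, hR r -> hM m -> P (r *: m) -> P m \/ colon P r].

(* Gr_M(K): intersection of graded prime submodules containing K (M if none) *)
Definition GrM (K : M -> Prop) : M -> Prop := fun m =>
  forall P, graded_prime_sub P -> incl K P -> P m.

Definition primeful (K : M -> Prop) :=
  forall p, graded_prime_ideal p -> incl (colon K) p ->
    exists P, [/\ graded_prime_sub P, incl K P & seteq (colon P) p].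

Definition quasi_primary_sub (Q : M -> Prop) :=
  [/\ graded_submodule Q, proper_sub Q &
      forall r m, hR r -> hM m -> Q (r *: m) -> Gr (colon Q) r \/ GrM Q m].

Definition qpSpec (Q : M -> Prop) := quasi_primary_sub Q /\ primeful Q.

Definition qpV (K : M -> Prop) (Q : M -> Prop) :=
  qpSpec Q /\ incl (Gr (colon K)) (Gr (colon Q)).

Definition qp_closed (Y : (M -> Prop) -> Prop) :=
  exists K, graded_submodule K /\ seteq Y (qpV K).

Definition qp_irreducible (Y : (M -> Prop) -> Prop) :=
  (exists Q, Y Q) /\
  forall A1 A2, qp_closed A1 -> qp_closed A2 ->
    (forall Q, Y Q -> A1 Q \/ A2 Q) -> incl Y A1 \/ incl Y A2.

Definition qp_closure (A : (M -> Prop) -> Prop) : (M -> Prop) -> Prop :=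
  fun Q => forall C, qp_closed C -> incl A C -> C Q.

Definition generic_point (Y : (M -> Prop) -> Prop) (Q : M -> Prop) :=
  Y Q /\ seteq Y (qp_closure (fun P => P = Q)).

Definition quasi_primary_ideal (q : R -> Prop) :=
  [/\ graded_ideal q, proper_ideal q &
      forall a b, hR a -> hR b -> q (a * b) -> Gr q a \/ Gr q b].

Definition Ann : R -> Prop := colon (fun m => m = 0).

Definition quasi_primaryful :=
  (forall m : M, m = 0) \/
  ((exists m : M, m <> 0) /\
   forall q, quasi_primary_ideal q -> incl Ann q ->
     exists Q, qpSpec Q /\ seteq (Gr (colon Q)) (Gr q)).

End Graded.

From mathcomp Require Import all_boot all_algebra.
From mathcomp Require boolp classical_sets.
From Stdlib Require Import Classical.
Set Implicit Arguments. Unset Strict Implicit. Unset Printing Implicit Defensive.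
Import GRing.Theory.
Local Open Scope ring_scope.

(* For P in qp.Spec_g(M), Gr((P:M)) is prime with respect to homogeneous
   elements: if a homogeneous product ac lies in it but a does not, the
   quasi-primary condition puts c^n M inside Gr_M(P); a graded prime ideal
   containing (P:M) and avoiding the powers of c exists by Zorn's lemma, and
   the primeful property realises it as (P':M) for a graded prime submodule
   P' containing P, which then contains c^n M, a contradiction.
   Hence, for an irreducible closed Y, the graded ideal J = /\_{P in Y} Gr((P:M))
   is quasi-primary: a homogeneous product ac in J covers Y by the closed sets
   qp-V(aM) and qp-V(cM). Quasi-primaryfulness gives Q with Gr((Q:M)) = Gr(J),
   and then Y = qp-V(Q). Conversely qp-V(Q) is the closure of {Q}, so it is
   irreducible with generic point Q. *)

Section HomogeneousSums.
Variables (G : Type) (T : zmodType).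

Inductive hsum (P : G -> T -> Prop) : nat -> T -> Prop :=
  | hsum0 : hsum P 0 0
  | hsumS g y n x : P g y -> hsum P n x -> hsum P n.+1 (y + x).

Lemma hsum_mono (P P' : G -> T -> Prop) n x :
  (forall g y, P g y -> P' g y) -> hsum P n x -> hsum P' n x.
Proof. by move=> PP'; elim=> [|g y m z /PP' Py _ IH]; [constructor | exact: hsumS Py IH]. Qed.

Lemma hsumD P n x m y : hsum P n x -> hsum P m y -> hsum P (n + m) (x + y).
Proof.
move=> Px Py; elim: Px => [|g z k w Pz _ IH]; first by rewrite add0r.
by rewrite -addrA addSn; exact: hsumS Pz IH.
Qed.

Lemma hsumN P n x : (forall g y, P g y -> P g (- y)) -> hsum P n x -> hsum P n (- x).
Proof.
move=> PN; elim=> [|g y k z Py _ IH]; first by rewrite oppr0; constructor.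
by rewrite opprD; exact: hsumS (PN _ _ Py) IH.
Qed.

Lemma hsum_closed P (A : T -> Prop) n x :
  A 0 -> (forall a b, A a -> A b -> A (a + b)) ->
  (forall g y, P g y -> A y) -> hsum P n x -> A x.
Proof. by move=> A0 AD PA; elim=> // g y k z /PA Ay _; exact: AD. Qed.

Lemma hsum_split P g n x : hsum P n x -> exists k m u v,
  [/\ hsum (fun h y => P h y /\ h = g) k u, hsum (fun h y => P h y /\ h <> g) m v,
      x = u + v & (k + m = n)%N].
Proof.
elim=> [|h y j z Py _ [k [m [u [v [Pu Pv -> <-]]]]]].
  by exists 0%N, 0%N, 0, 0; rewrite addr0; split=> //; constructor.
case: (classic (h = g)) => hg.
  exists k.+1, m, (y + u), v; rewrite addrA addSn; split=> //; exact: hsumS (conj Py hg) Pu.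
exists k, m.+1, u, (y + v); rewrite addrCA addnS; split=> //; exact: hsumS (conj Py hg) Pv.
Qed.

Lemma family_hsumP (P : G -> T -> Prop) x :
  (exists n (gs : 'I_n -> G) (ys : 'I_n -> T),
     (forall i, P (gs i) (ys i)) /\ x = \sum_(i < n) ys i) <-> exists n, hsum P n x.
Proof.
split=> [[n [gs [ys [Pys ->]]]] | [m]].
  exists n; elim: n gs ys Pys => [|n IH] gs ys Pys; first by rewrite big_ord0; constructor.
  rewrite big_ord_recl; apply: hsumS (Pys ord0) _.
  exact: (IH (fun i => gs (lift ord0 i)) (fun i => ys (lift ord0 i))).
elim=> [|g y k z Py _ [n [gs [ys [Pys ->]]]]].
  have gs0 : 'I_0 -> G by case.
  by exists 0%N, gs0, (fun _ => 0); split; [case | rewrite big_ord0].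
exists n.+1, (fun i => if unlift ord0 i is Some j then gs j else g),
  (fun i => if unlift ord0 i is Some j then ys j else y); split.
  by move=> i; case: unliftP.
by rewrite big_ord_recl unlift_none; congr (_ + _); apply: eq_bigr => i _; rewrite liftK.
Qed.

Lemma decomposesP (Tg : G -> T -> Prop) (A : T -> Prop) x :
  decomposes Tg A x <-> exists n, hsum (fun g y => Tg g y /\ A y) n x.
Proof. exact: family_hsumP. Qed.

Lemma decomposes_mono (Tg : G -> T -> Prop) (A B : T -> Prop) x :
  incl A B -> decomposes Tg A x -> decomposes Tg B x.
Proof.
move=> AB /decomposesP [n Hx]; apply/decomposesP; exists n.
by apply: hsum_mono Hx => g y [Ty /AB].
Qed.

Lemma zmod_closedN (A : T -> Prop) a : zmod_closed_P A -> A a -> A (- a).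
Proof. by case=> A0 AB Aa; rewrite -sub0r; exact: AB. Qed.

Lemma zmod_closedD (A : T -> Prop) a b : zmod_closed_P A -> A a -> A b -> A (a + b).
Proof. by move=> Az Aa Ab; rewrite -[b]opprK; apply: Az.2 => //; exact: zmod_closedN. Qed.

End HomogeneousSums.

Section GradedZmod.
Variables (G : Type) (T : zmodType) (Tg : G -> T -> Prop).
Hypotheses (Tg_zmod : forall g, zmod_closed_P (Tg g)) (Tg_indep : independent Tg).

Lemma hsum_deg g n x : hsum (fun h y => Tg h y /\ h = g) n x -> Tg g x.
Proof.
apply: hsum_closed => [|a b|h y [Ty <-] //]; first by case: (Tg_zmod g).
exact: zmod_closedD (Tg_zmod g).
Qed.

Lemma independent_hsum g x n v :
  Tg g x -> hsum (fun h y => Tg h y /\ h <> g) n v -> x = v -> x = 0.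
Proof.
move=> Tx Hv; have [m [gs [ys [Hys ->]]]] := (family_hsumP _ v).2 (ex_intro _ n Hv).
by apply: (Tg_indep Tx) => i; case: (Hys i) => Tgi gi; exact: conj gi Tgi.
Qed.

(* Uniqueness of homogeneous components. *)
Lemma component_mem (N : T -> Prop) g x y m n :
  N 0 -> (forall a b, N a -> N b -> N (a + b)) ->
  Tg g x -> hsum (fun h z => Tg h z /\ h <> g) m y ->
  hsum (fun h z => Tg h z /\ N z) n (x + y) -> N x.
Proof.
move=> N0 ND Tx Hy /(hsum_split g) [k [l [u [v [Hu Hv E _]]]]].
have Nu : N u by apply: hsum_closed Hu => // h z [[_ ?] _].
have Tu : Tg g u by apply: hsum_deg; apply: hsum_mono Hu => h z [[? _] ?].
have Hvy : hsum (fun h z => Tg h z /\ h <> g) (l + m) (v - y).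
  apply: hsumD; first by apply: hsum_mono Hv => h z [[? _] ?].
  by apply: hsumN Hy => h z [? ?]; split=> //; exact: zmod_closedN.
have : x - u = 0.
  apply: (independent_hsum _ Hvy); first exact: (Tg_zmod g).2.
  by apply/eqP; rewrite subr_eq (addrC _ u) addrA -E addrK.
by move/eqP; rewrite subr_eq0 => /eqP ->.
Qed.

Lemma decomposes_of_components (I : T -> Prop) :
  I 0 -> (forall a b, I a -> I b -> I (a - b)) ->
  (forall g u m v, Tg g u -> hsum (fun h z => Tg h z /\ h <> g) m v -> I (u + v) -> I u) ->
  forall x, decomposes Tg (fun _ => True) x -> I x -> decomposes Tg I x.
Proof.
move=> I0 IB Icomp x /decomposesP [n Hx] Ix; apply/decomposesP.
elim/ltn_ind: n x Hx Ix => n IH x Hx.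
case: n x / Hx IH => [|g y k z [Ty _] Hz] IH Ix; first by exists 0%N; constructor.
have [k1 [k2 [u [v [Hu Hv E Hk]]]]] := hsum_split g Hz.
have Tyu : Tg g (y + u).
  by apply: zmod_closedD (Tg_zmod g) Ty _; apply: hsum_deg; apply: hsum_mono Hu => h w [[]].
have Hv' : hsum (fun h z => Tg h z /\ h <> g) k2 v by apply: hsum_mono Hv => h w [[]].
rewrite {}E addrA in Ix *; have Iyu : I (y + u) by exact: Icomp _ _ _ _ Tyu Hv' Ix.
have Iv : I v by have := IB _ _ Ix Iyu; rewrite [_ + v]addrC addrK.
have [m Hm] : exists m, hsum (fun h z => Tg h z /\ I z) m v.
  by apply: IH (hsum_mono _ Hv) Iv => [|h w [[]]] //; rewrite ltnS -Hk leq_addl.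
by exists m.+1; exact: hsumS (conj Tyu Iyu) Hm.
Qed.

End GradedZmod.

Section GroupLaw.
Variables (G : Type) (gl : group_law G).

Lemma gmulgV x : gmul gl x (ginv gl x) = gunit gl.
Proof.
set y := ginv gl x; set z := gmul gl x y.
have zz : gmul gl z z = z by rewrite /z -gmulA (gmulA gl y) gmulV gmul1.
by rewrite -[z](gmul1 gl) -(gmulV gl z) -gmulA zz.
Qed.

Lemma gmulg1 x : gmul gl x (gunit gl) = x.
Proof. by rewrite -(gmulV gl x) gmulA gmulgV gmul1. Qed.

Lemma gmulIg h : injective (fun g => gmul gl g h).
Proof. by move=> g g' /= E; rewrite -[g]gmulg1 -[g']gmulg1 -(gmulgV h) !gmulA E. Qed.

End GroupLaw.

Definition rad (R : comPzRingType) (I : R -> Prop) (y : R) := exists k, I (y ^+ k).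

Lemma rad_pow (R : comPzRingType) (I : R -> Prop) x k : rad I (x ^+ k) -> rad I x.
Proof. by case=> j Ij; exists (k * j)%N; rewrite exprM. Qed.

Section Ideal.
Variables (R : comPzRingType) (I : R -> Prop).
Hypothesis I_ideal : is_ideal I.

Lemma ideal0 : I 0. Proof. by case: I_ideal. Qed.
Lemma idealD a b : I a -> I b -> I (a + b). Proof. by case: I_ideal => _ + _; apply. Qed.
Lemma idealMl r a : I a -> I (r * a). Proof. by case: I_ideal => _ _; apply. Qed.
Lemma idealMr r a : I a -> I (a * r). Proof. by rewrite mulrC; exact: idealMl. Qed.
Lemma idealB a b : I a -> I b -> I (a - b).
Proof. by move=> Ia Ib; rewrite -mulN1r; apply: idealD => //; exact: idealMl. Qed.
Lemma idealMn a k : I a -> I (a *+ k). Proof. by rewrite -mulr_natl; exact: idealMl. Qed.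

Lemma rad0 : rad I 0. Proof. by exists 1%N; rewrite expr1; exact: ideal0. Qed.

Lemma radD a b : rad I a -> rad I b -> rad I (a + b).
Proof.
case=> i Ia [j Ib]; exists (i + j)%N; rewrite exprDn.
apply: big_ind => [|x y|k _]; [exact: ideal0 | exact: idealD |].
apply: idealMn; have [lt_kj | le_jk] := ltnP k j.
  by rewrite -addnBA ?(ltnW lt_kj) // exprD -mulrA; exact: idealMr.
by rewrite -(subnK le_jk) exprD mulrA; exact: idealMl.
Qed.

End Ideal.

Section Graded.
Variables (G : Type) (gl : group_law G) (R : comPzRingType) (Rg : G -> R -> Prop)
  (M : lmodType R) (Mg : G -> M -> Prop).
Hypotheses (HR : graded_ring gl Rg) (HM : graded_module gl Rg Mg).

Lemma Rg_zmod g : zmod_closed_P (Rg g). Proof. by case: HR. Qed.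
Lemma Rg_mul g h a b : Rg g a -> Rg h b -> Rg (gmul gl g h) (a * b).
Proof. by case: HR => _ + _ _; apply. Qed.
Lemma Rg_decomposes x : decomposes Rg (fun _ => True) x.
Proof. by case: HR => _ _ + _; apply. Qed.
Lemma Rg_hsum x : exists n, hsum (fun g y => Rg g y /\ True) n x.
Proof. exact/decomposesP/Rg_decomposes. Qed.
Lemma Rg_indep : independent Rg. Proof. by case: HR. Qed.

Lemma Mg_zmod g : zmod_closed_P (Mg g). Proof. by case: HM. Qed.
Lemma Mg_scale g h r m : Rg g r -> Mg h m -> Mg (gmul gl g h) (r *: m).
Proof. by case: HM => _ + _ _; apply. Qed.
Lemma Mg_hsum x : exists n, hsum (fun g y => Mg g y /\ True) n x.
Proof. by case: HM => _ _ /(_ x) /decomposesP. Qed.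
Lemma Mg_indep : independent Mg. Proof. by case: HM. Qed.

Lemma hR_exp a k : hR Rg a -> hR Rg (a ^+ k.+1).
Proof.
case=> g Ra; elim: k => [|k [h IH]]; first by exists g; rewrite expr1.
by exists (gmul gl h g); rewrite exprSr; exact: Rg_mul.
Qed.

Lemma GrP I x : Gr Rg I x <-> exists n, hsum (fun g y => Rg g y /\ rad I y) n x.
Proof. exact: decomposesP. Qed.

Lemma Gr_hom I g y : Rg g y -> rad I y -> Gr Rg I y.
Proof.
by move=> Ry Iy; apply/GrP; exists 1%N; rewrite -[y]addr0; exact: hsumS (conj Ry Iy) (hsum0 _).
Qed.

Lemma Gr_rad I : is_ideal I -> incl (Gr Rg I) (rad I).
Proof.
move=> I_ideal x /GrP [n].
by apply: hsum_closed => [|a b|g y []]; [exact: rad0 | exact: radD |].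
Qed.

Lemma Gr_rad_mono I J : incl (rad I) (rad J) -> incl (Gr Rg I) (Gr Rg J).
Proof.
move=> IJ x /GrP [n Hx]; apply/GrP; exists n.
by apply: hsum_mono Hx => g y [Ry /IJ]; split.
Qed.

Lemma GrD I a b : Gr Rg I a -> Gr Rg I b -> Gr Rg I (a + b).
Proof. by move=> /GrP [n Ha] /GrP [m Hb]; apply/GrP; exists (n + m)%N; exact: hsumD. Qed.

Lemma Gr0 I : Gr Rg I 0. Proof. by apply/GrP; exists 0%N; constructor. Qed.

Lemma Gr_mulr_hom I r g y : is_ideal I -> Rg g y -> rad I y -> Gr Rg I (r * y).
Proof.
move=> I_ideal Ry [k Iy]; have [n Hr] := Rg_hsum r.
apply: (hsum_closed (A := fun r => Gr Rg I (r * y))) Hr => [|a b|h z [Rz _]].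
- by rewrite mul0r; exact: Gr0.
- by rewrite mulrDl; exact: GrD.
by apply: (Gr_hom (Rg_mul Rz Ry)); exists k; rewrite exprMn; exact: idealMl.
Qed.

Lemma Gr_ideal I : is_ideal I -> is_ideal (Gr Rg I).
Proof.
move=> I_ideal; split=> [|a b|r x]; [exact: Gr0 | exact: GrD |].
move=> /GrP [n Hx]; apply: (hsum_closed (A := fun x => Gr Rg I (r * x))) Hx => [|a b|g y [Ry Iy]].
- by rewrite mulr0; exact: Gr0.
- by rewrite mulrDr; exact: GrD.
exact: Gr_mulr_hom I_ideal Ry Iy.
Qed.

Lemma Gr_graded I : is_ideal I -> graded_ideal Rg (Gr Rg I).
Proof.
move=> I_ideal; split; first exact: Gr_ideal.
move=> x /GrP [n Hx]; apply/decomposesP; exists n.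
by apply: hsum_mono Hx => g y [Ry Iy]; split=> //; exact: Gr_hom Ry Iy.
Qed.

Lemma graded_sub_Gr I : graded_ideal Rg I -> incl I (Gr Rg I).
Proof.
move=> [_ I_dec] x /I_dec /decomposesP [n Hx]; apply/GrP; exists n.
by apply: hsum_mono Hx => g y [Ry Iy]; split=> //; exists 1%N; rewrite expr1.
Qed.

Lemma graded_ideal_bigcap (A : Type) (D : A -> Prop) (F : A -> R -> Prop) :
  (forall i, D i -> graded_ideal Rg (F i)) -> graded_ideal Rg (fun x => forall i, D i -> F i x).
Proof.
move=> F_graded; have F_ideal i Di := (F_graded i Di).1.
split.
  split=> [i /F_ideal /ideal0 | a b Fa Fb i Di | r a Fa i Di] //.
  - by apply: idealD (F_ideal i Di) _ _ (Fa i Di) (Fb i Di).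
  - by apply: idealMl (F_ideal i Di) _ _ (Fa i Di).
move=> x Fx; apply: (decomposes_of_components Rg_zmod _ _ _ _ Fx).
- by move=> i /F_ideal /ideal0.
- by move=> a b Fa Fb i Di; exact: idealB (F_ideal i Di) _ _ (Fa i Di) (Fb i Di).
- move=> g u m v Ru Hv Fuv i Di; have [/ideal0 F0 F_dec] := F_graded i Di.
  have /decomposesP [n Huv] := F_dec _ (Fuv i Di).
  exact: (component_mem Rg_zmod Rg_indep F0 (idealD (F_ideal i Di)) Ru Hv Huv).
exact: Rg_decomposes.
Qed.

Lemma colon_ideal (P : M -> Prop) : is_submodule P -> is_ideal (colon P).
Proof.
case=> P0 PD PZ; split=> [m | a b Pa Pb m | r a Pa m]; first by rewrite scale0r.
- by rewrite scalerDl; exact: PD.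
- by rewrite -scalerA; exact: PZ.
Qed.

Lemma colon_hom (P : M -> Prop) r :
  is_submodule P -> (forall h m, Mg h m -> P (r *: m)) -> colon P r.
Proof.
case=> P0 PD _ Pr m; have [n Hm] := Mg_hsum m.
apply: (hsum_closed (A := fun m => P (r *: m))) Hm => [|a b|h y [My _]].
- by rewrite scaler0.
- by rewrite scalerDr; exact: PD.
exact: Pr My.
Qed.

Lemma hsum_scale g h n v w :
  hsum (fun g' z => Rg g' z /\ g' <> g) n v -> Mg h w ->
  hsum (fun h' z => Mg h' z /\ h' <> gmul gl g h) n (v *: w).
Proof.
move=> Hv Mw; elim: Hv => [|g' z k x [Rz ne_g'g] _ IH]; first by rewrite scale0r; constructor.
rewrite scalerDl; apply: hsumS IH; split; first exact: Mg_scale Rz Mw.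
by move=> E; apply: ne_g'g; exact: gmulIg E.
Qed.

Lemma colon_graded (P : M -> Prop) : graded_submodule Mg P -> graded_ideal Rg (colon P).
Proof.
move=> [P_sub P_dec]; have P_ideal := colon_ideal P_sub.
split=> // x Px; apply: (decomposes_of_components Rg_zmod _ _ _ _ Px).
- exact: ideal0.
- exact: idealB.
- move=> g u m v Ru Hv Puv; have [P0 PD _] := P_sub.
  apply: (colon_hom P_sub) => h w Mw.
  have /decomposesP [n Huvw] := P_dec _ (Puv w); rewrite scalerDl in Huvw.
  exact: (component_mem Mg_zmod Mg_indep P0 PD (Mg_scale Ru Mw) (hsum_scale Hv Mw) Huvw).
- exact: Rg_decomposes.
Qed.

Lemma graded_ideal_adjoin (p : R -> Prop) x : graded_ideal Rg p -> hR Rg x ->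
  graded_ideal Rg (fun z => exists s r, p s /\ z = s + r * x).
Proof.
move=> [p_ideal p_dec] [g Rx]; set px := fun z => _.
have p_px : incl p px by move=> z pz; exists z, 0; rewrite mul0r addr0.
split.
  split=> [|a b [s [r [ps ->]]] [s' [r' [ps' ->]]] | r0 a [s [r [ps ->]]]].
  - exact: p_px (ideal0 p_ideal).
  - by exists (s + s'), (r + r'); rewrite mulrDl addrACA; split=> //; exact: idealD.
  - by exists (r0 * s), (r0 * r); rewrite mulrDr mulrA; split=> //; exact: idealMl.
move=> z [s [r [ps ->]]]; apply/decomposesP.
have [n1 Hs] : exists n, hsum (fun g y => Rg g y /\ px y) n s.
  exact/decomposesP/(decomposes_mono p_px)/p_dec.
have [n2 Hrx] : exists n, hsum (fun g y => Rg g y /\ px y) n (r * x).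
  have [n Hr] := Rg_hsum r; exists n; elim: Hr => [|h y k w [Ry _] _ IH].
    by rewrite mul0r; constructor.
  rewrite mulrDl; apply: hsumS IH; split; first exact: Rg_mul Ry Rx.
  by exists 0, y; rewrite add0r; split=> //; exact: ideal0.
by exists (n1 + n2)%N; exact: hsumD.
Qed.

Section Avoiding.
Variables (J0 : R -> Prop) (b : R).
Hypotheses (J0_graded : graded_ideal Rg J0) (J0_avoid : forall n, ~ J0 (b ^+ n)).

Definition avoiding (I : R -> Prop) :=
  [/\ graded_ideal Rg I, incl J0 I & forall n, ~ I (b ^+ n)].

(* [J0] is included so that the empty chain also has an upper bound. *)
Lemma avoiding_chain_union (A : (R -> Prop) -> Prop) :
  (forall I, A I -> avoiding I) -> (forall I I', A I -> A I' -> incl I I' \/ incl I' I) ->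
  avoiding (fun x => J0 x \/ exists2 I, A I & I x).
Proof.
move=> A_avoid A_total; set U := fun x => _.
pose A' I := I = J0 \/ A I.
have A'_avoid I : A' I -> avoiding I by case=> [-> | /A_avoid //]; split.
have A'_total I I' : A' I -> A' I' -> incl I I' \/ incl I' I.
  case=> [-> | AI] [-> | AI']; [by left | | | exact: A_total].
  - by left; case: (A_avoid _ AI').
  - by right; case: (A_avoid _ AI).
have A'_U I : A' I -> incl I U by case=> [-> x | AI x Ix]; [left | right; exists I].
have U_A' x : U x -> exists2 I, A' I & I x.
  by case=> [J0x | [I AI Ix]]; [exists J0; first left | exists I; first right].
have common x y : U x -> U y -> exists I, [/\ avoiding I, I x, I y & incl I U].
  move=> /U_A' [I AI Ix] /U_A' [I' AI' I'y].
  have [II' | I'I] := A'_total _ _ AI AI'.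
    by exists I'; split; [exact: A'_avoid | exact: II' | | exact: A'_U].
  by exists I; split; [exact: A'_avoid | | exact: I'I | exact: A'_U].
split; [split; first split | by move=> x; left | ].
- by left; exact: ideal0 J0_graded.1.
- move=> x y Ux Uy; have [I [[[I_ideal _] _ _] Ix Iy IU]] := common x y Ux Uy.
  exact/IU/(idealD I_ideal).
- move=> r x Ux; have [I [[[I_ideal _] _ _] Ix _ IU]] := common x x Ux Ux.
  exact/IU/(idealMl I_ideal).
- move=> x Ux; have [I [[[_ I_dec] _ _] Ix _ IU]] := common x x Ux Ux.
  exact: decomposes_mono IU (I_dec x Ix).
- move=> n [J0b | [I AI Ib]]; first exact: J0_avoid J0b.
  by case: (A_avoid _ AI) => _ _ /(_ n).
Qed.

Lemma maximal_avoiding_prime p :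
  avoiding p -> (forall I, avoiding I -> incl p I -> incl I p) -> graded_prime_ideal Rg p.
Proof.
move=> [p_graded J0p p_avoid] p_max; have p_ideal := p_graded.1.
split=> //; first by exists (b ^+ 0); exact: p_avoid.
have power_in_adjoin x : hR Rg x -> ~ p x -> exists i s r, p s /\ b ^+ i = s + r * x.
  move=> x_hom npx; apply: NNPP => no_power; apply: npx.
  pose px z := exists s r, p s /\ z = s + r * x.
  have p_px : incl p px by move=> z pz; exists z, 0; rewrite mul0r addr0.
  have px_avoid : avoiding px.
    split; first exact: graded_ideal_adjoin.
    - by move=> z /J0p /p_px.
    - by move=> n [s [r [ps E]]]; apply: no_power; exists n, s, r.
  apply: (p_max _ px_avoid p_px); exists 0, 1; rewrite add0r mul1r; split=> //.
  exact: ideal0.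
move=> a c a_hom c_hom pac; apply: NNPP => /not_or_and [npa npc].
have [i [s [r [ps Ei]]]] := power_in_adjoin a a_hom npa.
have [j [s' [r' [ps' Ej]]]] := power_in_adjoin c c_hom npc.
apply: (p_avoid (i + j)%N); rewrite exprD Ei Ej mulrDl !mulrDr.
apply: (idealD p_ideal); apply: (idealD p_ideal).
- exact: idealMr.
- exact: idealMr.
- exact: idealMl.
- by rewrite mulrACA; exact: idealMl.
Qed.

Lemma exists_avoiding_prime : exists p, graded_prime_ideal Rg p /\ avoiding p.
Proof.
have J0_avoiding : avoiding J0 by split.
pose le (s t : {I | avoiding I}) := boolp.asbool (incl (sval s) (sval t)).
have [| | |[p p_avoid] p_max] := @classical_sets.ZL_preorder _ (exist _ J0 J0_avoiding) le.
- by move=> s; apply/boolp.asboolP.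
- by move=> r s t /boolp.asboolP rs /boolp.asboolP st; apply/boolp.asboolP => x /rs /st.
- move=> C C_total; pose A I := exists2 s, C s & sval s = I.
  have A_avoid I : A I -> avoiding I by case=> s _ <-; exact: svalP.
  have A_total I I' : A I -> A I' -> incl I I' \/ incl I' I.
    by case=> s Cs <- [s' Cs' <-]; case: (C_total s s' Cs Cs') => /boolp.asboolP; [left | right].
  exists (exist _ _ (avoiding_chain_union A_avoid A_total)) => s Cs.
  by apply/boolp.asboolP => x sx /=; right; exists (sval s) => //; exists s.
exists p; split=> //; apply: maximal_avoiding_prime => // I I_avoid pI.
by apply/boolp.asboolP; apply: (p_max (exist _ I I_avoid)); apply/boolp.asboolP.
Qed.

End Avoiding.

Lemma rad_colon_of_GrM (P : M -> Prop) c : graded_submodule Mg P -> primeful Rg Mg P ->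
  (forall h m, Mg h m -> GrM Rg Mg P (c *: m)) -> rad (colon P) c.
Proof.
move=> P_graded P_primeful cM; apply: NNPP => c_notrad.
have c_avoid n : ~ colon P (c ^+ n) by move=> Pcn; apply: c_notrad; exists n.
have [p [p_prime [_ Pp p_avoid]]] := exists_avoiding_prime (colon_graded P_graded) c_avoid.
have [P' [P'_prime PP' P'p]] := P_primeful p p_prime Pp.
have [[P'_sub _] _ _] := P'_prime.
apply: (p_avoid 1%N); rewrite expr1; apply/P'p/(colon_hom P'_sub) => h m Mm.
exact: cM h m Mm P' P'_prime PP'.
Qed.

Lemma Gr_colon_prime (P : M -> Prop) a c : qpSpec Rg Mg P -> hR Rg a -> hR Rg c ->
  Gr Rg (colon P) (a * c) -> Gr Rg (colon P) a \/ Gr Rg (colon P) c.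
Proof.
move=> [[P_graded _ P_qp] P_primeful] a_hom c_hom.
have P_ideal := colon_ideal P_graded.1.
move=> /(Gr_rad P_ideal) [k ack]; have [[ga Ra] [gc Rc]] := (a_hom, c_hom).
have [a_rad | a_notrad] := classic (rad (colon P) a); first by left; exact: Gr_hom Ra a_rad.
right; apply: (Gr_hom Rc); apply: (rad_pow (k := k.+1)).
apply: rad_colon_of_GrM => // h m Mm.
have cm_hom : hM Mg (c ^+ k.+1 *: m).
  by have [g' Rg'] := hR_exp k c_hom; exists (gmul gl g' h); exact: Mg_scale.
have acm : P (a ^+ k.+1 *: (c ^+ k.+1 *: m)).
  by rewrite scalerA -exprMn exprSr; exact: (idealMr P_ideal _ ack m).
by case: (P_qp _ _ (hR_exp k a_hom) cm_hom acm) => // /(Gr_rad P_ideal) /rad_pow /a_notrad.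
Qed.

Definition aM (a : R) (m : M) := exists m', m = a *: m'.

Lemma aM_graded a : hR Rg a -> graded_submodule Mg (aM a).
Proof.
case=> g Ra; split.
  split=> [|x y [x' ->] [y' ->] | r x [x' ->]]; first by exists 0; rewrite scaler0.
  - by exists (x' + y'); rewrite scalerDr.
  - by exists (r *: x'); rewrite !scalerA mulrC.
move=> x [x' ->]; apply/decomposesP; have [n Hx'] := Mg_hsum x'; exists n.
elim: Hx' => [|h y k z [My _] _ IH]; first by rewrite scaler0; constructor.
by rewrite scalerDr; apply: hsumS IH; split; [exact: Mg_scale Ra My | exists y].
Qed.

Lemma Gr_colon_aM a : hR Rg a -> Gr Rg (colon (aM a)) a.
Proof. by case=> g Ra; apply: (Gr_hom Ra); exists 1%N => m; exists m; rewrite expr1. Qed.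

Lemma Gr_colon_aM_sub (P : M -> Prop) a : rad (colon P) a ->
  incl (Gr Rg (colon (aM a))) (Gr Rg (colon P)).
Proof.
move=> [j Paj]; apply: Gr_rad_mono => y [k yk_aM]; exists (k * j)%N => m.
have pow_aM i (m1 : M) : exists m', (y ^+ k) ^+ i *: m1 = a ^+ i *: m'.
  elim: i m1 => [|i IH] m1; first by exists m1; rewrite !expr0.
  have [m2 E2] := yk_aM m1; have [m3 E3] := IH m2.
  by exists m3; rewrite exprSr -scalerA E2 scalerA mulrC -scalerA E3 scalerA -exprS.
by rewrite exprM; have [m' ->] := pow_aM j m; exact: Paj.
Qed.

Lemma qpSpec_graded (Q : M -> Prop) : qpSpec Rg Mg Q -> graded_submodule Mg Q.
Proof. by case=> [[]]. Qed.

Lemma qpV_closed (K : M -> Prop) : graded_submodule Mg K -> qp_closed Rg Mg (qpV Rg Mg K).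
Proof. by exists K. Qed.

Lemma qpV_self (Q : M -> Prop) : qpSpec Rg Mg Q -> qpV Rg Mg Q Q.
Proof. by split. Qed.

Lemma qpV_sub_closed C (Q : M -> Prop) : qp_closed Rg Mg C -> C Q -> incl (qpV Rg Mg Q) C.
Proof. by case=> K [_ CK] /CK [_ KQ] P [P_qp QP]; apply/CK; split=> // x /KQ /QP. Qed.

Lemma qp_irreducible_qpV Y (Q : M -> Prop) :
  qpSpec Rg Mg Q -> seteq Y (qpV Rg Mg Q) -> qp_irreducible Rg Mg Y.
Proof.
move=> Q_qp YQ; have YQQ : Y Q by apply/YQ/qpV_self.
split; first by exists Q.
move=> A1 A2 A1_closed A2_closed /(_ Q YQQ) [A1Q | A2Q]; [left | right] => P /YQ.
- exact: qpV_sub_closed A1_closed A1Q P.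
- exact: qpV_sub_closed A2_closed A2Q P.
Qed.

Lemma qp_closure_point (Q : M -> Prop) :
  qpSpec Rg Mg Q -> seteq (qp_closure Rg Mg (fun P => P = Q)) (qpV Rg Mg Q).
Proof.
move=> Q_qp P; split=> [|QP C C_closed CQ].
  by apply; [exact/qpV_closed/qpSpec_graded | move=> _ ->; exact: qpV_self].
exact: qpV_sub_closed C_closed (CQ Q erefl) P QP.
Qed.

Section IrreducibleClosed.
Variables (Y : (M -> Prop) -> Prop) (K : M -> Prop).
Hypotheses (YK : seteq Y (qpV Rg Mg K)) (Y_irr : qp_irreducible Rg Mg Y).

Definition Gr_colon_meet (r : R) := forall P, Y P -> Gr Rg (colon P) r.

Lemma Y_qpSpec P : Y P -> qpSpec Rg Mg P. Proof. by move/YK=> []. Qed.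

Lemma Y_colon_ideal P : Y P -> is_ideal (colon P).
Proof. by move/Y_qpSpec/qpSpec_graded=> [/colon_ideal]. Qed.

Lemma Gr_colon_meet_graded : graded_ideal Rg Gr_colon_meet.
Proof. by apply: graded_ideal_bigcap => P /Y_colon_ideal /Gr_graded. Qed.

Lemma Gr_colon_meet_sub P : Y P -> incl (Gr Rg Gr_colon_meet) (Gr Rg (colon P)).
Proof.
move=> YP; apply: Gr_rad_mono => r [k /(_ P YP) /(Gr_rad (Y_colon_ideal YP))].
exact: rad_pow.
Qed.

Lemma Ann_sub_Gr_colon_meet : incl (Ann M) Gr_colon_meet.
Proof.
move=> r Ann_r P /Y_qpSpec /qpSpec_graded P_graded.
apply: (graded_sub_Gr (colon_graded P_graded)) => m.
by case: P_graded => [[P0 _ _] _]; rewrite (Ann_r m).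
Qed.

Lemma Gr_colon_meet_quasi_primary : quasi_primary_ideal Rg Gr_colon_meet.
Proof.
have [[P0 YP0] Y_cover] := Y_irr.
split; first exact: Gr_colon_meet_graded.
  exists 1 => /(_ P0 YP0) /(Gr_rad (Y_colon_ideal YP0)) [k P0_1].
  have [[_ [m P0m] _] _] := Y_qpSpec YP0.
  by apply: P0m; have := P0_1 m; rewrite expr1n scale1r.
move=> a c a_hom c_hom ac.
have aM_qpV_closed d : hR Rg d -> qp_closed Rg Mg (qpV Rg Mg (aM d)).
  by move/aM_graded; exact: qpV_closed.
have cover P : Y P -> qpV Rg Mg (aM a) P \/ qpV Rg Mg (aM c) P.
  move=> YP; have P_qp := Y_qpSpec YP.
  by case: (Gr_colon_prime P_qp a_hom c_hom (ac P YP)) => /(Gr_rad (Y_colon_ideal YP)) d_rad;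
    [left | right]; split=> //; exact: Gr_colon_aM_sub.
have meet_of_cover d : hR Rg d -> incl Y (qpV Rg Mg (aM d)) -> Gr Rg Gr_colon_meet d.
  move=> d_hom Yd; apply: graded_sub_Gr Gr_colon_meet_graded _ _ => P /Yd [_]; apply.
  exact: Gr_colon_aM.
have [Ya | Yc] := Y_cover _ _ (aM_qpV_closed a a_hom) (aM_qpV_closed c c_hom) cover.
  by left; exact: meet_of_cover.
by right; exact: meet_of_cover.
Qed.

Lemma irreducible_closed_qpV :
  quasi_primaryful Rg Mg -> exists Q, qpSpec Rg Mg Q /\ seteq Y (qpV Rg Mg Q).
Proof.
have [[P0 YP0] _] := Y_irr.
case=> [M0 | [_ Mqpf]].
  have [[[[P0_0 _ _] _] [m P0m] _] _] := Y_qpSpec YP0.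
  by rewrite (M0 m) in P0m.
have [Q [Q_qp QJ]] := Mqpf _ Gr_colon_meet_quasi_primary Ann_sub_Gr_colon_meet.
exists Q; split=> // P; split=> [YP | [P_qp QP]].
  by split; [exact: Y_qpSpec | move=> x /QJ; exact: Gr_colon_meet_sub].
apply/YK; split=> // x Kx; apply/QP/QJ.
by apply: graded_sub_Gr Gr_colon_meet_graded _ _ => P' /YK [_]; apply.
Qed.

End IrreducibleClosed.

End Graded.

Theorem theorem4p9 (G : Type) (gl : group_law G) (R : comPzRingType)
  (Rg : G -> R -> Prop) (M : lmodType R) (Mg : G -> M -> Prop) :
  graded_ring gl Rg -> graded_module gl Rg Mg -> quasi_primaryful Rg Mg ->
  (forall Y : (M -> Prop) -> Prop, incl Y (qpSpec Rg Mg) ->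
     (qp_irreducible Rg Mg Y /\ qp_closed Rg Mg Y <->
      exists Q, qpSpec Rg Mg Q /\ seteq Y (qpV Rg Mg Q))) /\
  (forall Y : (M -> Prop) -> Prop, incl Y (qpSpec Rg Mg) ->
     qp_irreducible Rg Mg Y -> qp_closed Rg Mg Y ->
     exists Q, generic_point Rg Mg Y Q).
Proof.
move=> HR HM M_qpf; split=> Y _.
  split=> [[Y_irr [K [_ YK]]] | ].
    exact: (irreducible_closed_qpV HR HM YK Y_irr M_qpf).
  move=> [Q [Q_qp YQ]]; split; first exact: qp_irreducible_qpV Q_qp YQ.
  by exists Q; split; first exact: qpSpec_graded Q_qp.
move=> Y_irr [K [_ YK]].
have [Q [Q_qp YQ]] := irreducible_closed_qpV HR HM YK Y_irr M_qpf.
exists Q; split; first exact/YQ/qpV_self.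
move=> P; rewrite YQ; symmetry; exact: qp_closure_point.
Qed.
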